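(* Let $\lambda\in(\frac16,\frac56)$ and $x\in[0,1]\setminus\mathcal E$. Suppose there is a finite $p\ge0$ with $\beta_{1,2}(x,p)=0$ and $\beta_{1,2}(x,p+1)=1$. Then $m_0(x)=\dots=m_p(x)=0$, $m_{p+1}(x)=6\lambda$ if $u_p(x)=1$ and $m_{p+1}(x)=-6\lambda$ if $u_p(x)=2$, and for all $n\ge p+1$: $m_{n+1}(x)=m_n(x)$ if $u_n(x)\in\{0,3\}$; $m_{n+1}(x)=\mathrm{sgn}(m_n(x))\big(|m_n(x)|+6\lambda\sqrt{1+m_n(x)^2}\big)$ if $u_n(x)=1$; $m_{n+1}(x)=\mathrm{sgn}(m_n(x))\big(|m_n(x)|-6\lambda\sqrt{1+m_n(x)^2}\big)$ if $u_n(x)=2$.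
   Context: Construction: $F^\lambda_0\equiv0$ on $[0,1]$ (one interval of generation $0$). Given $F^\lambda_n$ with its $4^n$ closed intervals of generation $n$ (covering $[0,1]$, disjoint interiors, $F^\lambda_n$ affine on each), on each interval $[a,b]$ of generation $n$, with $\ell=b-a$ and slope $m$, $F^\lambda_{n+1}$ coincides with $F^\lambda_n$ at $a,a+\ell/3,a+2\ell/3,b$, equals $F^\lambda_n(a+\ell/2)+\lambda\ell\sqrt{1+m^2}$ at $a+\ell/2$, and is affine on $[a,a+\ell/3],[a+\ell/3,a+\ell/2],[a+\ell/2,a+2\ell/3],[a+2\ell/3,b]$. Dynamics: $T(x)=3x$ on $[0,\frac13)$, $6x-2$ on $[\frac13,\frac12)$, $4-6x$ on $[\frac12,\frac23)$, $3x-2$ on $[\frac23,1]$; $U(x)=0,1,2,3$ on these intervals respectively; $u_n(x)=U(T^nx)$; $\beta_i(x,n)=\#\{k<n:u_k(x)=i\}$, $\beta_{1,2}=\beta_1+\beta_2$. $\mathcal E$ is the set of $x$ whose digit sequence $(u_n(x))$ is eventually constantly $0$ or eventually constantly $3$; for $x\notin\mathcal E$, $F^\lambda_n$ is differentiable at $x$ and $m_n(x)$ is its slope at $x$. *)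

From Stdlib Require Import Reals Lra List.
From Coquelicot Require Import Coquelicot.
Import ListNotations.
Open Scope R_scope.

(** * The functions F^lambda_n, represented by their list of nodes
    (x-coordinate, value) in increasing order of x; F^lambda_n is the
    piecewise-affine interpolation of its nodes. Consecutive nodes
    delimit the 4^n intervals of generation n. *)

Fixpoint refine (lam : R) (l : list (R * R)) : list (R * R) :=
  match l with
  | p :: ((q :: _) as t) =>
      let a := fst p in let ya := snd p in
      let b := fst q in let yb := snd q in
      let len := b - a in
      let m := (yb - ya) / len in
      p :: (a + len / 3, ya + m * (len / 3))
        :: (a + len / 2, ya + m * (len / 2) + lam * len * sqrt (1 + m ^ 2))
        :: (a + 2 * len / 3, ya + m * (2 * len / 3))
        :: refine lam t
  | _ => l
  end.

Definition nodes (lam : R) (n : nat) : list (R * R) :=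
  Nat.iter n (refine lam) [(0, 0); (1, 0)].

(** Piecewise-affine interpolation of a node list (only meaningful on [0,1]). *)
Fixpoint interp (l : list (R * R)) (x : R) : R :=
  match l with
  | p :: ((q :: _) as t) =>
      if Rle_dec x (fst q)
      then snd p + (snd q - snd p) / (fst q - fst p) * (x - fst p)
      else interp t x
  | _ => 0
  end.

Definition F (lam : R) (n : nat) (x : R) : R := interp (nodes lam n) x.

Definition slope (lam : R) (n : nat) (x : R) : R := Derive (F lam n) x.

Definition T (x : R) : R :=
  if Rlt_dec x (1/3) then 3 * x
  else if Rlt_dec x (1/2) then 6 * x - 2
  else if Rlt_dec x (2/3) then 4 - 6 * x
  else 3 * x - 2.

Definition U (x : R) : nat :=
  if Rlt_dec x (1/3) then 0%nat
  else if Rlt_dec x (1/2) then 1%nat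
  else if Rlt_dec x (2/3) then 2%nat
  else 3%nat.

Definition u (n : nat) (x : R) : nat := U (Nat.iter n T x).

Fixpoint beta (i : nat) (x : R) (n : nat) : nat :=
  match n with
  | O => O
  | S k => (beta i x k + (if Nat.eqb (u k x) i then 1 else 0))%nat
  end.

Definition beta12 (x : R) (n : nat) : nat := (beta 1 x n + beta 2 x n)%nat.

Definition inE (x : R) : Prop :=
  exists (N d : nat), (d = 0%nat \/ d = 3%nat) /\
    forall n, (N <= n)%nat -> u n x = d.

Definition sgn (r : R) : R :=
  if Rlt_dec 0 r then 1 else if Rlt_dec r 0 then -1 else 0.

From Pilot Require Import Defs.
From Stdlib Require Import Reals.
From Coquelicot Require Import Coquelicot.
From Stdlib Require Import Lra Lia List Sorted.
Import ListNotations.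
Open Scope R_scope.

(* On the interval of generation n containing x, F^lambda_n is affine and
   T^n maps that interval affinely onto [0,1], increasingly or decreasingly.
   The digit u_n(x) and this orientation say which of the four subintervals
   of generation n+1 contains x; their slopes are m, m + 6 lambda s,
   m - 6 lambda s and m, where s = sqrt(1 + m^2). Since x is not in E, T^n x
   never reaches 0 or 1, so x is interior to its interval and m_n(x) is that
   slope. Before p all digits are 0 or 3, so the slope stays 0 and the
   orientation increasing. From p+1 on the orientation is decreasing exactly
   when the slope is negative: a digit 2 reverses both, because
   6 lambda s > s > |m| as soon as lambda > 1/6. This sign invariant turns the orientation-dependent +- into the
   sgn formulas. *)

Definition chord (p q : R * R) : R := (snd q - snd p) / (fst q - fst p).

Definition left_third (p q : R * R) : R * R :=
  (fst p + (fst q - fst p) / 3, snd p + chord p q * ((fst q - fst p) / 3)).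

Definition peak (lam : R) (p q : R * R) : R * R :=
  (fst p + (fst q - fst p) / 2,
   snd p + chord p q * ((fst q - fst p) / 2)
     + lam * (fst q - fst p) * sqrt (1 + chord p q ^ 2)).

Definition right_third (p q : R * R) : R * R :=
  (fst p + 2 * (fst q - fst p) / 3, snd p + chord p q * (2 * (fst q - fst p) / 3)).

Lemma refine_cons2 lam p q t :
  refine lam (p :: q :: t) =
  p :: left_third p q :: peak lam p q :: right_third p q :: refine lam (q :: t).
Proof. reflexivity. Qed.

Lemma refine_cons lam q t : exists r, refine lam (q :: t) = q :: r.
Proof.
  destruct t as [|w t]; [now exists [] |].
  rewrite refine_cons2. eexists; reflexivity.
Qed.

Lemma refine_app lam l1 p t :
  exists r1, refine lam (l1 ++ p :: t) = r1 ++ refine lam (p :: t).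
Proof.
  induction l1 as [|z l1 [r IH]]; [now exists [] |].
  destruct l1 as [|w l1]; cbn [app] in *; rewrite refine_cons2.
  - now exists [z; left_third z p; peak lam z p; right_third z p].
  - rewrite IH. now exists (z :: left_third z w :: peak lam z w :: right_third z w :: r).
Qed.

Lemma chords_refine lam p q : fst p < fst q ->
  chord p (left_third p q) = chord p q /\
  chord (left_third p q) (peak lam p q) = chord p q + 6 * lam * sqrt (1 + chord p q ^ 2) /\
  chord (peak lam p q) (right_third p q) = chord p q - 6 * lam * sqrt (1 + chord p q ^ 2) /\
  chord (right_third p q) q = chord p q.
Proof.
  intros Hpq. assert (Hl : fst q - fst p <> 0) by lra.
  unfold left_third, peak, right_third, chord; cbn [fst snd].
  repeat split; field; exact Hl.
Qed.

Definition adjacent (l : list (R * R)) (p q : R * R) : Prop :=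
  exists l1 l2, l = l1 ++ p :: q :: l2.

Lemma adjacent_head p q l : adjacent (p :: q :: l) p q.
Proof. now exists [], l. Qed.

Lemma adjacent_cons z l p q : adjacent l p q -> adjacent (z :: l) p q.
Proof. intros (l1 & l2 & ->). now exists (z :: l1), l2. Qed.

Lemma adjacent_app l1 l p q : adjacent l p q -> adjacent (l1 ++ l) p q.
Proof. intros (l2 & l3 & ->). exists (l1 ++ l2), l3. now rewrite <- app_assoc. Qed.

Lemma refine_adjacent lam l p q : adjacent l p q ->
  adjacent (refine lam l) p (left_third p q) /\
  adjacent (refine lam l) (left_third p q) (peak lam p q) /\
  adjacent (refine lam l) (peak lam p q) (right_third p q) /\
  adjacent (refine lam l) (right_third p q) q.
Proof.
  intros (l1 & l2 & ->).
  destruct (refine_app lam l1 p (q :: l2)) as [r1 ->].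
  destruct (refine_cons lam q l2) as [r Hr].
  rewrite refine_cons2, Hr.
  repeat split; apply adjacent_app.
  - apply adjacent_head.
  - apply adjacent_cons, adjacent_head.
  - do 2 apply adjacent_cons. apply adjacent_head.
  - do 3 apply adjacent_cons. apply adjacent_head.
Qed.

Definition fst_lt (p q : R * R) : Prop := fst p < fst q.

Lemma refine_sorted lam l : Sorted fst_lt l -> Sorted fst_lt (refine lam l).
Proof.
  induction l as [|p [|q t] IH]; intros Hl; [assumption .. |].
  apply Sorted_inv in Hl as [Hqt Hpq]. apply HdRel_inv in Hpq. unfold fst_lt in Hpq.
  rewrite refine_cons2.
  specialize (IH Hqt). destruct (refine_cons lam q t) as [r Hr]. rewrite Hr in IH |- *.
  do 4 (apply Sorted_cons;
         [| constructor; unfold fst_lt, left_third, peak, right_third; cbn [fst]; lra]).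
  exact IH.
Qed.

Lemma nodes_sorted lam n : Sorted fst_lt (nodes lam n).
Proof.
  induction n as [|n IH].
  - repeat constructor. unfold fst_lt; cbn [fst]; lra.
  - exact (refine_sorted lam _ IH).
Qed.

Lemma sorted_app_lt l1 p t :
  Sorted fst_lt (l1 ++ p :: t) -> forall z, In z l1 -> fst z < fst p.
Proof.
  intros Hs. apply Sorted_StronglySorted in Hs; [| intros a b c; unfold fst_lt; lra].
  induction l1 as [|w l1 IH]; [easy |].
  apply StronglySorted_inv in Hs as [Hs Hw]. rewrite Forall_forall in Hw.
  intros z [<- | Hz]; [apply Hw, in_app_iff; right; left |]; auto.
Qed.

Lemma interp_app l1 p q l2 y :
  (forall z, In z l1 -> fst z < y) -> fst p < y <= fst q ->
  Defs.interp (l1 ++ p :: q :: l2) y = snd p + chord p q * (y - fst p).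
Proof.
  intros Hl1 Hy. induction l1 as [|z [|w l1] IH]; cbn [app Defs.interp].
  - destruct Rle_dec; [reflexivity | lra].
  - destruct Rle_dec; [lra |]. apply IH; easy.
  - destruct Rle_dec.
    + assert (fst w < y) by (apply Hl1; right; left; reflexivity). lra.
    + apply IH. intros v Hv. apply Hl1. right; exact Hv.
Qed.

Lemma slope_interior lam n x p q :
  adjacent (nodes lam n) p q -> fst p < x < fst q -> slope lam n x = chord p q.
Proof.
  intros (l1 & l2 & Hl) Hx. unfold slope.
  rewrite (Derive_ext_loc _ (fun y => snd p + chord p q * (y - fst p))).
  - apply is_derive_unique. auto_derive; [exact I | ring].
  - assert (Hd : 0 < Rmin (x - fst p) (fst q - x)) by (apply Rmin_glb_lt; lra).
    exists (mkposreal _ Hd). intros y Hy. apply Rabs_def2 in Hy. cbn in Hy.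
    pose proof (Rmin_l (x - fst p) (fst q - x)). pose proof (Rmin_r (x - fst p) (fst q - x)).
    pose proof (sorted_app_lt l1 p _ ltac:(rewrite <- Hl; apply nodes_sorted)) as Hlt.
    unfold F. rewrite Hl. apply interp_app; [| lra].
    intros z Hz. specialize (Hlt z Hz). lra.
Qed.

Lemma T_U_cases t :
  (t < 1/3 /\ U t = 0%nat /\ T t = 3 * t) \/
  (1/3 <= t < 1/2 /\ U t = 1%nat /\ T t = 6 * t - 2) \/
  (1/2 <= t < 2/3 /\ U t = 2%nat /\ T t = 4 - 6 * t) \/
  (2/3 <= t /\ U t = 3%nat /\ T t = 3 * t - 2).
Proof.
  unfold U, T.
  destruct (Rlt_dec t (1/3)); [left; auto |].
  destruct (Rlt_dec t (1/2)); [right; left; repeat split; auto; lra |].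
  destruct (Rlt_dec t (2/3)); [right; right; left; repeat split; auto; lra |].
  right; right; right; repeat split; auto; lra.
Qed.

(* [o = true] when T^n reverses the order on the interval [fst p, fst q]. *)
Definition cell (lam x : R) (n : nat) (p q : R * R) (o : bool) : Prop :=
  fst p < fst q /\ adjacent (nodes lam n) p q /\
  x = if o then fst q - (fst q - fst p) * Nat.iter n T x
      else fst p + (fst q - fst p) * Nat.iter n T x.

Definition orient (o : bool) : R := if o then -1 else 1.

Definition flip (d : nat) (o : bool) : bool := if Nat.eqb d 2 then negb o else o.

Definition bump (d : nat) : R :=
  match d with 1%nat => 1 | 2%nat => -1 | _ => 0 end.

Definition next_slope (lam : R) (d : nat) (o : bool) (m : R) : R :=
  m + orient o * bump d * (6 * lam * sqrt (1 + m ^ 2)).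

Lemma cell_initial lam x : cell lam x 0 (0, 0) (1, 0) false.
Proof. split; [cbn; lra | split; [apply adjacent_head | cbn; ring]]. Qed.

Lemma cell_step {lam x n p q o} : cell lam x n p q o ->
  exists p' q', cell lam x (S n) p' q' (flip (u n x) o) /\
    chord p' q' = next_slope lam (u n x) o (chord p q).
Proof.
  intros (Hpq & Hadj & Hx).
  destruct (refine_adjacent lam _ _ _ Hadj) as (A0 & A1 & A2 & A3).
  destruct (chords_refine lam p q Hpq) as (C0 & C1 & C2 & C3).
  unfold cell, u, next_slope.
  change (nodes lam (S n)) with (refine lam (nodes lam n)).
  rewrite Nat.iter_succ.
  set (t := Nat.iter n T x) in *.
  (* Digit d selects piece d of the refined interval, or piece 3 - d under
     reversed orientation; the goals come by digit, reversed orientation first. *)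
  destruct (T_U_cases t)
    as [(Ht & -> & ->) | [(Ht & -> & ->) | [(Ht & -> & ->) | (Ht & -> & ->)]]];
    destruct o; cbn [flip orient bump Nat.eqb negb];
    [ exists (right_third p q), q | exists p, (left_third p q)
    | exists (peak lam p q), (right_third p q) | exists (left_third p q), (peak lam p q)
    | exists (left_third p q), (peak lam p q) | exists (peak lam p q), (right_third p q)
    | exists p, (left_third p q) | exists (right_third p q), q ].
  all: split; [split; [| split; [assumption |]] | rewrite ?C0, ?C1, ?C2, ?C3; ring].
  all: unfold left_third, peak, right_third; cbn [fst]; first [lra | rewrite Hx; field].
Qed.

Lemma iter_T_bounds x n : 0 <= x <= 1 -> 0 <= Nat.iter n T x <= 1.
Proof.
  intros Hx. induction n as [|n IH]; [exact Hx |]. rewrite Nat.iter_succ.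
  destruct (T_U_cases (Nat.iter n T x))
    as [(Ht & _ & ->) | [(Ht & _ & ->) | [(Ht & _ & ->) | (Ht & _ & ->)]]]; lra.
Qed.

Lemma iter_T_stuck x n c :
  T c = c -> Nat.iter n T x = c -> forall k, (n <= k)%nat -> u k x = U c.
Proof.
  intros Hc Hn k Hk. unfold u. f_equal.
  induction Hk as [|k _ IH]; [exact Hn |]. now rewrite Nat.iter_succ, IH.
Qed.

Lemma iter_T_interior x n : 0 <= x <= 1 -> ~ inE x -> 0 < Nat.iter n T x < 1.
Proof.
  intros Hx HE. destruct (iter_T_bounds x n Hx) as [H0 H1].
  split; apply Rnot_le_lt; intros Hle; apply HE.
  - exists n, 0%nat. split; [now left |].
    replace 0%nat with (U 0) by (unfold U; destruct Rlt_dec; lra || reflexivity).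
    apply iter_T_stuck; [unfold T; destruct Rlt_dec; lra | lra].
  - exists n, 3%nat. split; [now right |].
    replace 3%nat with (U 1) by (unfold U; repeat destruct Rlt_dec; lra || reflexivity).
    apply iter_T_stuck; [unfold T; repeat destruct Rlt_dec; lra | lra].
Qed.

Lemma slope_cell {lam x n p q o} : 0 <= x <= 1 -> ~ inE x ->
  cell lam x n p q o -> slope lam n x = chord p q.
Proof.
  intros Hx HE (Hpq & Hadj & Hpos). apply (slope_interior _ _ _ _ _ Hadj).
  pose proof (iter_T_interior x n Hx HE) as Ht.
  assert (0 < (fst q - fst p) * Nat.iter n T x < fst q - fst p) by (split; nra).
  destruct o; lra.
Qed.

Lemma slope_succ_cell {lam x n p q o} : 0 <= x <= 1 -> ~ inE x ->
  cell lam x n p q o -> slope lam (S n) x = next_slope lam (u n x) o (chord p q).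
Proof.
  intros Hx HE Hc. destruct (cell_step Hc) as (p' & q' & Hc' & <-).
  exact (slope_cell Hx HE Hc').
Qed.

Lemma beta_mono i x k n : (k <= n)%nat -> (beta i x k <= beta i x n)%nat.
Proof. induction 1; cbn [beta]; lia. Qed.

Lemma beta_succ_hit i x k : u k x = i -> (1 <= beta i x (S k))%nat.
Proof. intros Hk. cbn [beta]. rewrite Hk, Nat.eqb_refl. lia. Qed.

Lemma beta12_zero_digits x p k :
  beta12 x p = 0%nat -> (k < p)%nat -> u k x <> 1%nat /\ u k x <> 2%nat.
Proof.
  unfold beta12. intros Hp Hk. split; intros Hu.
  - pose proof (beta_succ_hit _ _ _ Hu). pose proof (beta_mono 1 x _ _ Hk). lia.
  - pose proof (beta_succ_hit _ _ _ Hu). pose proof (beta_mono 2 x _ _ Hk). lia.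
Qed.

Lemma beta12_step_digit x p :
  beta12 x p = 0%nat -> beta12 x (S p) = 1%nat -> u p x = 1%nat \/ u p x = 2%nat.
Proof.
  unfold beta12. cbn [beta]. intros Hp HSp.
  destruct (Nat.eqb_spec (u p x) 1), (Nat.eqb_spec (u p x) 2); lia.
Qed.

Lemma next_slope_flat lam d o m :
  d <> 1%nat -> d <> 2%nat -> next_slope lam d o m = m /\ flip d o = o.
Proof.
  intros H1 H2. unfold next_slope, flip.
  destruct d as [|[|[|d]]]; try contradiction; cbn [bump Nat.eqb]; split; ring || reflexivity.
Qed.

Lemma next_slope_zero lam d o : next_slope lam d o 0 = orient o * bump d * (6 * lam).
Proof.
  unfold next_slope. replace (1 + 0 ^ 2) with 1 by ring. rewrite sqrt_1. ring.
Qed.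

Lemma Rabs_lt_sqrt_1_plus_sq m : Rabs m < sqrt (1 + m ^ 2).
Proof.
  rewrite <- sqrt_Rsqr_abs. apply sqrt_lt_1_alt. unfold Rsqr. split; [nra | lra].
Qed.

Lemma next_slope_orient_pos lam d o m : 1/6 < lam ->
  0 < orient o * m -> 0 < orient (flip d o) * next_slope lam d o m.
Proof.
  intros Hlam Hm. pose proof (Rabs_lt_sqrt_1_plus_sq m) as Hs.
  pose proof (Rle_abs m). pose proof (Rle_abs (- m)). rewrite Rabs_Ropp in *.
  unfold next_slope, flip, orient in *.
  set (s := sqrt (1 + m ^ 2)) in *.
  assert (s < 6 * lam * s) by nra.
  destruct o, d as [|[|[|d]]]; cbn [bump Nat.eqb negb]; nra.
Qed.

Lemma orient_sgn o m : 0 < orient o * m -> orient o = sgn m.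
Proof. unfold orient, sgn. destruct o; intros Hm; repeat destruct Rlt_dec; lra. Qed.

Lemma sgn_Rabs m : sgn m * Rabs m = m.
Proof.
  unfold sgn. destruct (Rlt_dec 0 m); [rewrite Rabs_pos_eq; lra |].
  destruct (Rlt_dec m 0); [rewrite Rabs_left; lra | lra].
Qed.

Lemma next_slope_sgn lam d o m : 0 < orient o * m ->
  ((d = 0 \/ d = 3)%nat -> next_slope lam d o m = m) /\
  (d = 1%nat ->
     next_slope lam d o m = sgn m * (Rabs m + 6 * lam * sqrt (1 + m ^ 2))) /\
  (d = 2%nat ->
     next_slope lam d o m = sgn m * (Rabs m - 6 * lam * sqrt (1 + m ^ 2))).
Proof.
  intros Hm. unfold next_slope. rewrite (orient_sgn _ _ Hm).
  repeat split; intros Hd; [destruct Hd as [-> | ->] | subst d ..]; cbn [bump];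
    rewrite ?Rmult_plus_distr_l, ?Rmult_minus_distr_l, ?sgn_Rabs; ring.
Qed.

Lemma flat_cell_before lam x p : beta12 x p = 0%nat ->
  forall n, (n <= p)%nat -> exists a b, cell lam x n a b false /\ chord a b = 0.
Proof.
  intros Hp n. induction n as [|n IH]; intros Hn.
  - exists (0, 0), (1, 0). split; [apply cell_initial | unfold chord; cbn; field].
  - destruct IH as (a & b & Hc & Hm); [lia |].
    destruct (cell_step Hc) as (a' & b' & Hc' & Hm').
    destruct (beta12_zero_digits x p n Hp) as [H1 H2]; [lia |].
    destruct (next_slope_flat lam _ false (chord a b) H1 H2) as [Hflat Hflip].
    rewrite Hflip in Hc'. exists a', b'. split; [exact Hc' |].
    now rewrite Hm', Hflat.
Qed.

Lemma signed_cell_after lam x p : 1/6 < lam ->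
  beta12 x p = 0%nat -> beta12 x (S p) = 1%nat ->
  forall n, (p < n)%nat -> exists a b o, cell lam x n a b o /\ 0 < orient o * chord a b.
Proof.
  intros Hlam Hp HSp n Hn. induction Hn as [|n Hn IH].
  - destruct (flat_cell_before lam x p Hp p (le_n p)) as (a & b & Hc & Hm).
    destruct (cell_step Hc) as (a' & b' & Hc' & Hm').
    exists a', b', (flip (u p x) false). split; [exact Hc' |].
    rewrite Hm', Hm, next_slope_zero.
    destruct (beta12_step_digit x p Hp HSp) as [-> | ->]; cbn; lra.
  - destruct IH as (a & b & o & Hc & Hs).
    destruct (cell_step Hc) as (a' & b' & Hc' & Hm').
    exists a', b', (flip (u n x) o). split; [exact Hc' |].
    rewrite Hm'. exact (next_slope_orient_pos lam _ _ _ Hlam Hs).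
Qed.

Theorem lemma3p3 (lam x : R) (p : nat) :
  1/6 < lam < 5/6 ->
  0 <= x <= 1 -> ~ inE x ->
  beta12 x p = 0%nat -> beta12 x (S p) = 1%nat ->
  (forall k : nat, (k <= p)%nat -> slope lam k x = 0) /\
  (u p x = 1%nat -> slope lam (S p) x = 6 * lam) /\
  (u p x = 2%nat -> slope lam (S p) x = - (6 * lam)) /\
  (forall n : nat, (p + 1 <= n)%nat ->
     ((u n x = 0%nat \/ u n x = 3%nat) ->
        slope lam (S n) x = slope lam n x) /\
     (u n x = 1%nat ->
        slope lam (S n) x =
          sgn (slope lam n x) *
          (Rabs (slope lam n x) + 6 * lam * sqrt (1 + (slope lam n x) ^ 2))) /\
     (u n x = 2%nat ->
        slope lam (S n) x =
          sgn (slope lam n x) *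
          (Rabs (slope lam n x) - 6 * lam * sqrt (1 + (slope lam n x) ^ 2)))).
Proof.
  intros Hlam Hx HE Hp HSp.
  destruct (flat_cell_before lam x p Hp p (le_n p)) as (a & b & Hcp & Hmp).
  assert (Hfirst : slope lam (S p) x = bump (u p x) * (6 * lam)).
  { rewrite (slope_succ_cell Hx HE Hcp), Hmp, next_slope_zero. cbn; ring. }
  split; [| split; [| split]].
  - intros k Hk. destruct (flat_cell_before lam x p Hp k Hk) as (a' & b' & Hc & Hm).
    now rewrite (slope_cell Hx HE Hc).
  - intros Hu. rewrite Hfirst, Hu. cbn; ring.
  - intros Hu. rewrite Hfirst, Hu. cbn; ring.
  - intros n Hn.
    destruct (signed_cell_after lam x p (proj1 Hlam) Hp HSp n ltac:(lia))
      as (a' & b' & o & Hc & Hs).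
    rewrite (slope_succ_cell Hx HE Hc), (slope_cell Hx HE Hc).
    exact (next_slope_sgn lam _ _ _ Hs).
Qed.
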